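(* Let $(\star)$ be a linear system over $\mathbb{F}_q$ in $k$ variables, and suppose that $(\star)$ is equivalent to a linear system $(\star')$ whose coefficient matrix (after reordering the variables) has the block form $\begin{pmatrix}A_1&0\\0&A_2\end{pmatrix}$ with $A_1\in\mathbb{F}_q^{m_1\times k_1}$, $A_2\in\mathbb{F}_q^{m_2\times k_2}$ and $m_1,m_2,k_1,k_2\ne0$. Then $(\star)$ is moderate if and only if the systems with coefficient matrices $A_1$ and $A_2$ are both moderate.
   Context: A linear system with coefficient matrix $A=(a_{ij})\in\mathbb{F}_q^{m\times k}$ has solutions $(x_1,\dots,x_k)\in(\mathbb{F}_q^n)^k$ with $\sum_j a_{ij}x_j=0$ for all $i$. Two systems are equivalent if each equation of one is a linear combination of the equations of the other. A $(\star)$-shape is a solution with $x_1,\dots,x_k$ pairwise distinct. A system is moderate if there exist constants $\beta,\gamma>0$ with $\gamma<q$ such that for every $n$, every $S\subseteq\mathbb{F}_q^n$ with $|S|\ge\beta\gamma^n$ contains a shape $(x_1,\dots,x_k)\in S^k$. *)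

From HB Require Import structures.
From mathcomp Require Import all_boot all_order all_algebra all_fingroup all_field.
From mathcomp Require Import reals.
Set Implicit Arguments. Unset Strict Implicit. Unset Printing Implicit Defensive.
Import Order.TTheory GRing.Theory Num.Theory.
Local Open Scope ring_scope.

Definition is_solution (F : fieldType) (m k n : nat) (A : 'M[F]_(m, k))
  (x : 'I_k -> 'rV[F]_n) : Prop :=
  forall i : 'I_m, \sum_(j < k) A i j *: x j = 0.

Definition is_shape (F : fieldType) (m k n : nat) (A : 'M[F]_(m, k))
  (x : 'I_k -> 'rV[F]_n) : Prop :=
  is_solution A x /\ injective x.

Definition moderate (R : realType) (F : finFieldType) (m k : nat)
  (A : 'M[F]_(m, k)) : Prop :=
  exists beta gamma : R,
    [/\ 0 < beta, 0 < gamma, gamma < #|F|%:R &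
      forall (n : nat) (S : {set 'rV[F]_n}),
        beta * gamma ^+ n <= #|S|%:R ->
        exists x : 'I_k -> 'rV[F]_n, (forall j, x j \in S) /\ is_shape A x].

Definition equiv_sys (F : fieldType) (m m' k : nat)
  (A : 'M[F]_(m, k)) (B : 'M[F]_(m', k)) : Prop :=
  (exists C : 'M[F]_(m, m'), A = C *m B) /\
  (exists D : 'M[F]_(m', m), B = D *m A).

From HB Require Import structures.
From mathcomp Require Import all_boot all_order all_algebra all_fingroup all_field.
From mathcomp Require Import reals lra.
Set Implicit Arguments. Unset Strict Implicit. Unset Printing Implicit Defensive.
Import Order.TTheory GRing.Theory Num.Theory.
Local Open Scope ring_scope.

(* Equivalent systems and systems differing by a reordering of the variables
   have the same shapes up to relabelling, so moderateness transfers.  For the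
   block-diagonal system, a shape restricts to shapes of A1 and A2; conversely,
   given a dense S, first find a shape x1 of A1 in S, then a shape of A2 in
   S minus the k1 points of x1, which is still dense once beta is enlarged by
   k1; gluing the two gives a shape of the block system with gamma the larger
   of the two gammas. *)

Definition mx_of_rows (F : fieldType) (k n : nat) (x : 'I_k -> 'rV[F]_n) :
  'M[F]_(k, n) := \matrix_j x j.

Definition cat_fun (T : Type) (k1 k2 : nat) (x1 : 'I_k1 -> T) (x2 : 'I_k2 -> T)
  (j : 'I_(k1 + k2)) : T :=
  match split j with inl a => x1 a | inr b => x2 b end.

Lemma cat_fun_lshift (T : Type) k1 k2 (x1 : 'I_k1 -> T) (x2 : 'I_k2 -> T) a :
  cat_fun x1 x2 (lshift k2 a) = x1 a.
Proof. by rewrite /cat_fun (unsplitK (inl _ a)). Qed.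

Lemma cat_fun_rshift (T : Type) k1 k2 (x1 : 'I_k1 -> T) (x2 : 'I_k2 -> T) b :
  cat_fun x1 x2 (rshift k1 b) = x2 b.
Proof. by rewrite /cat_fun (unsplitK (inr _ b)). Qed.

Lemma cat_fun_inj (T : eqType) k1 k2 (x1 : 'I_k1 -> T) (x2 : 'I_k2 -> T) :
  injective x1 -> injective x2 -> (forall a b, x1 a != x2 b) ->
  injective (cat_fun x1 x2).
Proof.
move=> inj1 inj2 x12 i j.
case: (split_ordP i) => a ->; case: (split_ordP j) => b ->;
  rewrite ?cat_fun_lshift ?cat_fun_rshift.
- by move/inj1 ->.
- by move/eqP; rewrite (negbTE (x12 a b)).
- by move/esym/eqP; rewrite (negbTE (x12 b a)).
- by move/inj2 ->.
Qed.

Lemma card_setD_imset (aT T : finType) (f : aT -> T) (A : {set aT}) (S : {set T}) :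
  (#|S| <= #|S :\: f @: A| + #|A|)%N.
Proof.
rewrite -(cardsID (f @: A) S) addnC leq_add2l.
exact: leq_trans (subset_leq_card (subsetIr _ _)) (leq_imset_card _ _).
Qed.

Section Solutions.
Variable F : fieldType.

Lemma is_solutionE m k n (A : 'M[F]_(m, k)) (x : 'I_k -> 'rV[F]_n) :
  is_solution A x <-> A *m mx_of_rows x = 0.
Proof.
have rowE i : row i (A *m mx_of_rows x) = \sum_(j < k) A i j *: x j.
  by rewrite row_mul mulmx_sum_row; apply: eq_bigr => j _; rewrite rowK mxE.
split=> [solx | Ax0 i]; first by apply/row_matrixP => i; rewrite rowE row0.
by rewrite -rowE Ax0 row0.
Qed.

Lemma eq_is_solution m k n (A : 'M[F]_(m, k)) (x x' : 'I_k -> 'rV[F]_n) :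
  x =1 x' -> is_solution A x <-> is_solution A x'.
Proof.
by move=> xx'; split=> solx i; rewrite -[RHS](solx i); apply: eq_bigr => j _;
  rewrite xx'.
Qed.

Lemma equiv_sys_solution m m' k n (A : 'M[F]_(m, k)) (B : 'M[F]_(m', k))
    (x : 'I_k -> 'rV[F]_n) :
  equiv_sys A B -> is_solution A x <-> is_solution B x.
Proof.
move=> [[C AE] [D BE]]; rewrite !is_solutionE.
by split=> X0; [rewrite BE | rewrite AE]; rewrite -mulmxA X0 mulmx0.
Qed.

Lemma is_solution_col_perm m k n (B : 'M[F]_(m, k)) (s : 'S_k)
    (y : 'I_k -> 'rV[F]_n) :
  is_solution (col_perm s B) (y \o s) <-> is_solution B y.
Proof.
suff sumE i : \sum_(j < k) col_perm s B i j *: (y \o s) j = \sum_(j < k) B i j *: y j.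
  by split=> soly i; [rewrite -sumE | rewrite sumE]; rewrite soly.
by rewrite (reindex_inj (@perm_inj _ s^-1)); apply: eq_bigr => j _;
  rewrite mxE /= permKV.
Qed.

Lemma is_solution_block_diag m1 m2 k1 k2 n (A1 : 'M[F]_(m1, k1))
    (A2 : 'M[F]_(m2, k2)) (y : 'I_(k1 + k2) -> 'rV[F]_n) :
  is_solution (block_mx A1 0 0 A2) y <->
  is_solution A1 (y \o lshift k2) /\ is_solution A2 (y \o @rshift k1 k2).
Proof.
rewrite !is_solutionE.
have -> : mx_of_rows y = col_mx (mx_of_rows (y \o lshift k2)) (mx_of_rows (y \o @rshift k1 k2)).
  by rewrite -[mx_of_rows y]vsubmxK; congr col_mx; apply/matrixP => i j; rewrite !mxE.
rewrite mul_block_col !mul0mx addr0 add0r.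
split=> [/eqP|[-> ->]]; last by rewrite col_mx0.
by rewrite col_mx_eq0 => /andP[/eqP -> /eqP ->].
Qed.

Lemma is_shape_block_diag m1 m2 k1 k2 n (A1 : 'M[F]_(m1, k1))
    (A2 : 'M[F]_(m2, k2)) (x1 : 'I_k1 -> 'rV[F]_n) (x2 : 'I_k2 -> 'rV[F]_n) :
  is_shape A1 x1 -> is_shape A2 x2 -> (forall a b, x1 a != x2 b) ->
  is_shape (block_mx A1 0 0 A2) (cat_fun x1 x2).
Proof.
move=> [sol1 inj1] [sol2 inj2] x12; split; last exact: cat_fun_inj.
apply/is_solution_block_diag; split.
  by apply: (eq_is_solution _ (cat_fun_lshift x1 x2)).2.
by apply: (eq_is_solution _ (cat_fun_rshift x1 x2)).2.
Qed.

End Solutions.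

Lemma sum_mul_expr_le_max (R : realFieldType) (b1 b2 c g1 g2 : R) (n : nat) :
  0 <= b1 -> 0 <= b2 -> 0 <= c -> 0 <= g1 -> 0 <= g2 ->
  b1 * g1 ^+ n + b2 * g2 ^+ n + c <= (b1 + b2 + c) * Num.max 1 (Num.max g1 g2) ^+ n.
Proof.
set g := Num.max 1 _ => b10 b20 c0 g10 g20.
have g1g : g1 <= g by rewrite !le_max lexx orbT.
have g2g : g2 <= g by rewrite !le_max lexx !orbT.
have gn1 : 1 <= g ^+ n by rewrite exprn_ege1 // le_max lexx.
rewrite !mulrDl; apply: lerD; last by rewrite ler_peMr.
by apply: lerD; apply: ler_wpM2l => //; apply: lerXn2r;
  rewrite ?nnegrE // (le_trans g10, le_trans g20).
Qed.

Section Moderate.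
Variables (R : realType) (F : finFieldType).

Lemma moderate_shape_transfer m k m' k' (A : 'M[F]_(m, k)) (B : 'M[F]_(m', k')) :
  (forall n (x : 'I_k -> 'rV[F]_n), is_shape A x ->
     exists y : 'I_k' -> 'rV[F]_n, is_shape B y /\ forall j, exists i, y j = x i) ->
  moderate R A -> moderate R B.
Proof.
move=> AB [b [g [b0 g0 gq HA]]]; exists b, g; split=> // n S /HA[x [xS /AB[y [shy yx]]]].
by exists y; split=> // j; have [i ->] := yx j.
Qed.

Lemma moderate_equiv m m' k (A : 'M[F]_(m, k)) (B : 'M[F]_(m', k)) :
  equiv_sys A B -> moderate R A <-> moderate R B.
Proof.
move=> eqAB; split; apply: moderate_shape_transfer => n x [solx injx];
  exists x; (split; last by move=> j; exists j); split=> //.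
- exact/(equiv_sys_solution _ eqAB).
- exact/(equiv_sys_solution _ eqAB).
Qed.

Lemma moderate_col_perm m k (B : 'M[F]_(m, k)) (s : 'S_k) :
  moderate R (col_perm s B) <-> moderate R B.
Proof.
split; apply: moderate_shape_transfer => n x [solx injx].
- exists (x \o s^-1)%g; split=> [|j]; last by exists (s^-1 j)%g.
  split; last by move=> i j /injx/perm_inj.
  apply/(is_solution_col_perm _ s); apply: (eq_is_solution _ _).1 solx => j.
  by rewrite /= permK.
- exists (x \o s); split=> [|j]; last by exists (s j).
  by split; [apply/is_solution_col_perm | move=> i j /injx/perm_inj].
Qed.

Lemma moderate_block_diag_proj m1 m2 k1 k2 (A1 : 'M[F]_(m1, k1))
    (A2 : 'M[F]_(m2, k2)) :
  moderate R (block_mx A1 0 0 A2) -> moderate R A1 /\ moderate R A2.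
Proof.
move=> modA; split; apply: moderate_shape_transfer modA => n y [/is_solution_block_diag[sol1 sol2] injy].
- exists (y \o lshift k2); split=> [|j]; last by exists (lshift k2 j).
  by split=> // i j /injy/lshift_inj.
- exists (y \o @rshift k1 k2); split=> [|j]; last by exists (rshift k1 j).
  by split=> // i j /injy/rshift_inj.
Qed.

Lemma moderate_block_diag m1 m2 k1 k2 (A1 : 'M[F]_(m1, k1)) (A2 : 'M[F]_(m2, k2)) :
  moderate R A1 -> moderate R A2 -> moderate R (block_mx A1 0 0 A2).
Proof.
move=> [b1 [g1 [b10 g10 g1q mod1]]] [b2 [g2 [b20 g20 g2q mod2]]].
have k10 : 0 <= k1%:R :> R by rewrite ler0n.
exists (b1 + b2 + k1%:R), (Num.max 1 (Num.max g1 g2)); split.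
- lra.
- by rewrite lt_max ltr01.
- by rewrite !gt_max ltr1n card_finNzRing_gt1 g1q g2q.
move=> n S HS.
have bound := le_trans (sum_mul_expr_le_max n (ltW b10) (ltW b20) k10 (ltW g10) (ltW g20)) HS.
have b1g1 : 0 <= b1 * g1 ^+ n by rewrite mulr_ge0 ?exprn_ge0 ?ltW.
have b2g2 : 0 <= b2 * g2 ^+ n by rewrite mulr_ge0 ?exprn_ge0 ?ltW.
have [x1 [x1S sh1]] : exists x1, (forall j, x1 j \in S) /\ is_shape A1 x1.
  by apply: mod1; lra.
pose S' := S :\: x1 @: [set: 'I_k1].
have cardS' : #|S|%:R <= #|S'|%:R + k1%:R :> R.
  by rewrite -natrD ler_nat; have := card_setD_imset x1 [set: 'I_k1] S; rewrite cardsT card_ord.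
have [x2 [x2S' sh2]] : exists x2, (forall j, x2 j \in S') /\ is_shape A2 x2.
  by apply: mod2; lra.
have x2S j : x2 j \in S /\ x2 j \notin x1 @: [set: 'I_k1].
  by move: (x2S' j); rewrite in_setD => /andP[].
exists (cat_fun x1 x2); split.
  by move=> j; rewrite /cat_fun; case: split => a; [exact: x1S | case: (x2S a)].
apply: is_shape_block_diag sh1 sh2 _ => a b; apply/eqP => x12.
by case: (x2S b); rewrite -x12 imset_f ?inE.
Qed.

End Moderate.

Theorem proposition2p2 (R : realType) (F : finFieldType)
  (m m1 m2 k1 k2 : nat) (A : 'M[F]_(m, k1 + k2))
  (A1 : 'M[F]_(m1, k1)) (A2 : 'M[F]_(m2, k2)) :
  (0 < m1)%N -> (0 < m2)%N -> (0 < k1)%N -> (0 < k2)%N ->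
  (exists s : 'S_(k1 + k2),
      equiv_sys A (col_perm s (block_mx A1 0 0 A2))) ->
  moderate R A <-> (moderate R A1 /\ moderate R A2).
Proof.
move=> _ _ _ _ [s eqA].
rewrite (moderate_equiv _ eqA) moderate_col_perm.
split; first exact: moderate_block_diag_proj.
by case; apply: moderate_block_diag.
Qed.
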